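(* For every $n\ge1$ there is a general ordinal setting with $n$ agents and $m=n+1$ outcomes and a preference profile on which every outcome has rank-approximation factor at least $\min\{n,m-1\}$; consequently no deterministic mechanism for general ordinal settings can have rank-approximation factor better than $\min\{n,m-1\}$.
   Context: General ordinal setting: $n$ agents, $m$ outcomes; each agent has a strict total order $\succ_j$ on the outcomes (any strict order allowed). $\mathrm{rank}_i(o;\succ)$ is the number of agents having $o$ among their top $i$ outcomes; $\mathrm{maxrank}_i(\succ)=\max_o\mathrm{rank}_i(o;\succ)$. An outcome $o$ has rank-approximation factor $\alpha$ on $\succ$ if $\mathrm{rank}_i(o;\succ)\ge\mathrm{maxrank}_i(\succ)/\alpha$ for all $i\in[m]$; a deterministic mechanism has factor $\alpha$ if its output has factor $\alpha$ on every profile. *)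

From HB Require Import structures.
From mathcomp Require Import all_boot all_order all_algebra all_fingroup.
Set Implicit Arguments. Unset Strict Implicit. Unset Printing Implicit Defensive.
Import Order.TTheory GRing.Theory Num.Theory.

(* A strict total order of agent j on the outcomes is a permutation
   [P j : {perm 'I_m}] listing the outcomes from best to worst:
   [P j k] is the outcome agent j ranks at position k (0 = top). *)
Definition profile (n m : nat) := 'I_n -> {perm 'I_m}.

Definition pos n m (P : profile n m) (j : 'I_n) (o : 'I_m) : nat :=
  ((P j)^-1)%g o.

Definition rank n m (P : profile n m) (i : nat) (o : 'I_m) : nat :=
  #|[set j : 'I_n | (pos P j o < i)%N]|.

Definition maxrank n m (P : profile n m) (i : nat) : nat :=
  \max_(o : 'I_m) rank P i o.

Definition has_factor (R : realFieldType) n m (alpha : R) (P : profile n m)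
    (o : 'I_m) : Prop :=
  (0 < alpha)%R /\
  forall i : nat, (1 <= i <= m)%N ->
    (((maxrank P i)%:R / alpha <= (rank P i o)%:R :> R)%R).

Definition mechanism (n m : nat) := profile n m -> 'I_m.

Definition mech_has_factor (R : realFieldType) n m (alpha : R)
    (M : mechanism n m) : Prop :=
  forall P : profile n m, has_factor alpha P (M P).

(* Let agent j rank outcome j first and the extra outcome n second.  No agent
   puts outcome n on top, while agent 0 does put outcome 0 there, so the first
   rank condition rules out outcome n for every finite factor.  Every other
   outcome j is among the top two outcomes of agent j only, whereas outcome n
   is among the top two of all n agents, so the second rank condition forces a
   factor of at least n. *)

From HB Require Import structures.
From mathcomp Require Import all_boot all_order all_algebra all_fingroup.
From mathcomp Require Import zify.
Set Implicit Arguments.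
Unset Strict Implicit.
Unset Printing Implicit Defensive.
Import Order.TTheory GRing.Theory Num.Theory.
Local Open Scope ring_scope.

Lemma rank_le_maxrank n m (P : profile n m) i o : (rank P i o <= maxrank P i)%N.
Proof. exact: (leq_bigmax (F := rank P i)). Qed.

Lemma has_factor_rank_le (R : realFieldType) n m (alpha : R) (P : profile n m)
    (o o' : 'I_m) (i : nat) :
  has_factor alpha P o -> (1 <= i <= m)%N ->
  (rank P i o')%:R <= alpha * (rank P i o)%:R.
Proof.
move=> [alpha_gt0 factor] /factor; rewrite ler_pdivrMr // mulrC.
by apply: le_trans; rewrite ler_nat rank_le_maxrank.
Qed.

Section FavouriteThenLast.
Variable n : nat.
Hypothesis n_gt0 : (0 < n)%N.

Definition own_outcome (j : 'I_n) : 'I_n.+1 := widen_ord (leqnSn n) j.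

(* [position j o] is the place of outcome [o] in the order of agent [j]. *)
Definition position (j : 'I_n) : {perm 'I_n.+1} :=
  (tperm (own_outcome j) ord0 * tperm ord_max (inord 1))%g.

Definition favourite_then_last : profile n n.+1 := fun j => ((position j)^-1)%g.

Local Notation P := favourite_then_last.

Lemma own_outcome_neq_last j : own_outcome j != ord_max.
Proof. by rewrite -val_eqE /= neq_ltn ltn_ord. Qed.

Lemma position_own j : position j (own_outcome j) = ord0.
Proof. by rewrite permM tpermL tpermD // -val_eqE /= ?inordK //; lia. Qed.

Lemma position_last j : position j ord_max = inord 1.
Proof.
rewrite permM (tpermD (own_outcome_neq_last j)) ?tpermL //.
by rewrite -val_eqE /= eq_sym -lt0n.
Qed.

Lemma pos_lt1 j o : (pos P j o < 1)%N = (o == own_outcome j).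
Proof.
rewrite /pos invgK ltnS leqn0 -[o == _](inj_eq (@perm_inj _ (position j))).
by rewrite position_own.
Qed.

Lemma pos_lt2 j o :
  (pos P j o < 2)%N = (o == own_outcome j) || (o == ord_max).
Proof.
rewrite ltnS leq_eqVlt pos_lt1 orbC; congr (_ || _).
rewrite /pos invgK -[o == _](inj_eq (@perm_inj _ (position j))) position_last.
by rewrite -val_eqE /= inordK.
Qed.

Lemma rank1_last : rank P 1 ord_max = 0%N.
Proof.
apply/eqP; rewrite cards_eq0; apply/eqP; apply/setP => j.
by rewrite !inE pos_lt1 eq_sym (negbTE (own_outcome_neq_last j)).
Qed.

Lemma rank1_own j : (0 < rank P 1 (own_outcome j))%N.
Proof. by rewrite card_gt0; apply/set0Pn; exists j; rewrite inE pos_lt1. Qed.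

Lemma rank2_last : rank P 2 ord_max = n.
Proof.
rewrite /rank -[RHS]card_ord; apply: eq_card => j.
by rewrite !inE pos_lt2 eqxx orbT.
Qed.

Lemma rank2_own j : rank P 2 (own_outcome j) = 1%N.
Proof.
rewrite -[RHS](cards1 j); apply: eq_card => k.
rewrite !inE pos_lt2 (negbTE (own_outcome_neq_last j)) orbF eq_sym.
by rewrite -val_eqE /= val_eqE.
Qed.

Lemma favourite_then_last_factor_ge (R : realFieldType) (alpha : R) o :
  has_factor alpha P o -> n%:R <= alpha.
Proof.
have [->|o_neq_last] := eqVneq o ord_max => factor.
  have := has_factor_rank_le (own_outcome (Ordinal n_gt0)) (i := 1) factor isT.
  by rewrite rank1_last mulr0 lern0 gtn_eqF ?rank1_own.
have o_lt_n : (o < n)%N.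
  by move: o_neq_last (ltn_ord o); rewrite -val_eqE /=; lia.
have o_own : o = own_outcome (Ordinal o_lt_n) by apply: val_inj.
move: factor; rewrite o_own => /(has_factor_rank_le ord_max (i := 2)).
by rewrite rank2_last rank2_own mulr1; apply; rewrite /=; lia.
Qed.

End FavouriteThenLast.

Theorem theorem15 (R : realFieldType) (n : nat) :
  (1 <= n)%N ->
  (exists P : profile n n.+1,
     forall (o : 'I_n.+1) (alpha : R), has_factor alpha P o ->
       (minn n (n.+1 - 1))%:R <= alpha)
  /\
  (forall (M : mechanism n n.+1) (alpha : R), mech_has_factor alpha M ->
       (minn n (n.+1 - 1))%:R <= alpha).
Proof.
move=> n_gt0; rewrite subn1 minnn.
have factor_ge := favourite_then_last_factor_ge n_gt0.
split; first by exists (@favourite_then_last n) => o alpha /factor_ge.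
by move=> M alpha factor_M; apply: factor_ge (factor_M _).
Qed.
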